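(* Let $X$ and $Y$ be infinite sets with $|X| < |Y|$. Then: (i) every sequence of words that is universal for $I(X)$ is universal for $I(Y)$; (ii) if $2^{\aleph_0} < |X|$, then every sequence of words that is universal for $I(Y)$ is universal for $I(X)$. In particular, if $2^{\aleph_0} < |X| \leq |Y|$, then the sequences universal for $I(X)$ are exactly the sequences universal for $I(Y)$.
   Context: $I(X)$ denotes the symmetric inverse monoid on $X$: all partial permutations of $X$ (bijections between subsets of $X$) under composition of binary relations. For an alphabet $A$ (a finite or countable set), $A^+$ is the free semigroup of non-empty words over $A$. A sequence $w_1, w_2, \ldots \in A^+$ is universal for a semigroup $S$ if for every sequence $s_1, s_2, \ldots \in S$ there is a semigroup homomorphism $\phi: A^+ \to S$ with $(w_n)\phi = s_n$ for all $n \geq 1$. *)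

From Stdlib Require Import List.
Import ListNotations.

Definition injective {A B : Type} (f : A -> B) : Prop :=
  forall a a', f a = f a' -> a = a'.
Definition card_le (A B : Type) : Prop := exists f : A -> B, injective f.
Definition card_lt (A B : Type) : Prop := card_le A B /\ ~ card_le B A.
Definition infinite (X : Type) : Prop := card_le nat X.
(* finite or countable *)
Definition countable (A : Type) : Prop := card_le A nat.

(* Binary relations on X; I(X) = partial bijections of X. *)
Definition rel (X : Type) := X -> X -> Prop.
Definition partial_perm {X : Type} (R : rel X) : Prop :=
  (forall x y y', R x y -> R x y' -> y = y') /\
  (forall x x' y, R x y -> R x' y -> x = x').
(* composition of binary relations: first R, then S *)
Definition rcomp {X : Type} (R S : rel X) : rel X :=
  fun x z => exists y, R x y /\ S y z.
Definition rel_eq {X : Type} (R S : rel X) : Prop :=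
  forall x y, R x y <-> S x y.

(* A^+ : non-empty words a :: l *)
Definition word (A : Type) := (A * list A)%type.

(* image of a word under the homomorphism A^+ -> I(X) extending f *)
Definition eval_word {X A : Type} (f : A -> rel X) (w : word A) : rel X :=
  fold_left (fun R b => rcomp R (f b)) (snd w) (f (fst w)).

Definition universal (X A : Type) (w : nat -> word A) : Prop :=
  forall s : nat -> rel X, (forall n, partial_perm (s n)) ->
  exists f : A -> rel X, (forall a, partial_perm (f a)) /\
    forall n, rel_eq (eval_word f (w n)) (s n).

From Pilot Require Import Defs.
From Stdlib Require Import Arith Relations Classical ClassicalEpsilon
  FunctionalExtensionality PropExtensionality ProofIrrelevance Cantor List.
From mathcomp Require classical_sets cardinality.

(* A family s of partial permutations of Z splits Z into countable connected components.
   Realizations of s by the words w_n can be transported along bijections, and realizations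
   on disjoint unions of components glue together.

   Upwards: by Zorn, Y is a disjoint union of s-closed pieces of cardinality |X|, plus a
   remainder smaller than |X| that is merged into one of the pieces; w realizes s on each
   piece because it is universal for I(X).

   Downwards: a component is described, through an enumeration, by a ternary predicate on nat,
   so there are at most 2^aleph0 isomorphism types. As |X| > 2^aleph0, some type rho occurs more
   than 2^aleph0 times. Realize in Y the union R of the components of finitely represented types
   together with |Y| copies of a component of type rho; the part reachable from R and one copy
   is a union of R and of at most 2^aleph0 copies, which fit inside the components of type rho.
   Every remaining type occurs infinitely often, so its components can be grouped into blocks
   of the countably many copies produced by the same construction with R empty. *)

Definition surjective {A B : Type} (f : A -> B) : Prop := forall b, exists a, f a = b.

Module ClassicalSetsFacts.
Import mathcomp.boot.ssreflect mathcomp.boot.ssrfun mathcomp.boot.ssrbool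
  mathcomp.boot.eqtype mathcomp.classical.boolp mathcomp.classical.classical_sets
  mathcomp.classical.functions mathcomp.classical.cardinality.
Local Open Scope classical_set_scope.
Local Open Scope card_scope.

Lemma zorn_chain_union (T : Type) (P : (T -> Prop) -> Prop) :
  (forall F : (T -> Prop) -> Prop, (forall B, F B -> P B) ->
     (forall B B', F B -> F B' -> (forall t, B t -> B' t) \/ (forall t, B' t -> B t)) ->
     P (fun t => exists B, F B /\ B t)) ->
  exists M, P M /\ forall B, (forall t, M t -> B t) -> P B -> forall t, B t -> M t.
Proof.
move=> chainP.
have [M [PM Mmax]] : exists M, P M /\ forall B, M `<` B -> ~ P B.
  apply: Zorn_bigcup => F FP Ftot.
  have -> : \bigcup_(B in F) B = (fun t => exists B, F B /\ B t).
    by apply/funext=> t; apply/propext; split=> [[B FB Bt]|[B [FB Bt]]]; exists B.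
  by apply: chainP => // B B' FB FB'; exact: Ftot.
exists M; split => // B MB PB t Bt.
apply: NNPP => Mt; apply: (Mmax B) => //; split => // BM; exact: Mt (BM t Bt).
Qed.

Lemma card_le_setT (A B : Type) : Defs.card_le A B -> [set: A] #<= [set: B].
Proof.
move=> [f injf].
have : $|{injfun [set: A] >-> [set: B]}|.
  by apply/injfunPex; exists f => // x y _ _; exact: injf.
by case=> g; apply: inj_card_le g.
Qed.

Lemma schroeder_bernstein (A B : Type) :
  Defs.card_le A B -> Defs.card_le B A ->
  exists h : A -> B, Defs.injective h /\ surjective h.
Proof.
move=> /card_le_setT AB /card_le_setT BA.
have /card_bijP [g [g' gK g'K]] := Cantor_Bernstein AB BA.
pose inA (a : A) : [set: A] := SigSub (mem_set (I : [set: A] a)).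
pose inB (b : B) : [set: B] := SigSub (mem_set (I : [set: B] b)).
exists (fun a => val (g (inA a))); split.
- by move=> a a' /val_inj /(can_inj gK) /(congr1 val).
- move=> b; exists (val (g' (inB b))).
  have -> : inA (val (g' (inB b))) = g' (inB b) by apply: val_inj.
  by rewrite g'K.
Qed.

End ClassicalSetsFacts.
Import ClassicalSetsFacts.

Lemma proj1_sig_inj {T : Type} {P : T -> Prop} (u v : {x | P x}) :
  proj1_sig u = proj1_sig v -> u = v.
Proof. apply eq_sig_hprop; intros; apply proof_irrelevance. Qed.

Lemma dependent_choice {T : Type} (B : T -> Type) (R : forall t, B t -> Prop) :
  (forall t, exists b : B t, R t b) -> exists F : forall t, B t, forall t, R t (F t).
Proof.
intro H. exists (fun t => proj1_sig (constructive_indefinite_description _ (H t))).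
intro t. exact (proj2_sig (constructive_indefinite_description _ (H t))).
Qed.

(** * Cardinal arithmetic *)

Lemma card_le_refl A : card_le A A.
Proof. exists (fun x => x). intros a b h; exact h. Qed.

Lemma card_le_trans A B C : card_le A B -> card_le B C -> card_le A C.
Proof. intros [f Hf] [g Hg]. exists (fun x => g (f x)). intros a a' h. apply Hf, Hg, h. Qed.

Lemma card_le_rel {A B} (R : A -> B -> Prop) :
  (forall a, exists b, R a b) -> (forall a a' b, R a b -> R a' b -> a = a') ->
  card_le A B.
Proof.
intros Htot Hinj. destruct (choice _ Htot) as [f Hf]. exists f.
intros a a' E. apply (Hinj a a' (f a)); [|rewrite E]; apply Hf.
Qed.

Lemma card_le_prod A A' B B' : card_le A A' -> card_le B B' -> card_le (A * B) (A' * B').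
Proof.
intros [f Hf] [g Hg]. exists (fun p => (f (fst p), g (snd p))).
intros [a b] [a' b'] h. injection h; intros h2 h1. rewrite (Hf _ _ h1), (Hg _ _ h2). reflexivity.
Qed.

Lemma card_le_sum A A' B B' : card_le A A' -> card_le B B' -> card_le (A + B) (A' + B').
Proof.
intros [f Hf] [g Hg]. exists (fun p => match p with inl a => inl (f a) | inr b => inr (g b) end).
intros [a|b] [a'|b'] h; try discriminate; injection h; intro h1.
- rewrite (Hf _ _ h1); reflexivity.
- rewrite (Hg _ _ h1); reflexivity.
Qed.

Lemma card_le_nat_pair : card_le (nat * nat) nat.
Proof.
exists Cantor.to_nat. intros a b h.
rewrite <- (Cantor.cancel_of_to a), <- (Cantor.cancel_of_to b), h. reflexivity.
Qed.

Lemma card_le_prod_nat_nat T : card_le ((T * nat) * nat) (T * nat).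
Proof.
apply (card_le_trans _ (T * (nat * nat))).
- exists (fun p => (fst (fst p), (snd (fst p), snd p))).
  intros [[a b] c] [[a' b'] c'] h. injection h; intros; subst; reflexivity.
- apply card_le_prod; [apply card_le_refl | apply card_le_nat_pair].
Qed.

Lemma card_le_sum_diag T : card_le (T + T) (T * nat).
Proof.
exists (fun p => match p with inl a => (a, 0) | inr a => (a, 1) end).
intros [a|a] [a'|a'] h; injection h; intros; subst; try discriminate; reflexivity.
Qed.

Lemma card_le_sig {T} (P : T -> Prop) : card_le {x | P x} T.
Proof. exists (@proj1_sig _ _). intros a b. apply proj1_sig_inj. Qed.

Lemma card_le_sig_sub {T} (P P' : T -> Prop) :
  (forall x, P x -> P' x) -> card_le {x | P x} {x | P' x}.
Proof.
intro H. exists (fun a => exist P' (proj1_sig a) (H _ (proj2_sig a))).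
intros a b h. apply proj1_sig_inj. exact (f_equal (@proj1_sig _ _) h).
Qed.

Definition partial_bij {A B} (r : A * B -> Prop) :=
  (forall a b b', r (a, b) -> r (a, b') -> b = b') /\
  (forall a a' b, r (a, b) -> r (a', b) -> a = a').

Lemma partial_bij_chain_union {A B} (F : (A * B -> Prop) -> Prop) :
  (forall r, F r -> partial_bij r) ->
  (forall r r', F r -> F r' -> (forall t, r t -> r' t) \/ (forall t, r' t -> r t)) ->
  partial_bij (fun t => exists r, F r /\ r t).
Proof.
intros HF Htot. split.
- intros a b b' [r [Fr rt]] [r' [Fr' rt']].
  destruct (Htot r r' Fr Fr') as [h|h].
  + apply (proj1 (HF r' Fr') a); auto.
  + apply (proj1 (HF r Fr) a); auto.
- intros a a' b [r [Fr rt]] [r' [Fr' rt']].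
  destruct (Htot r r' Fr Fr') as [h|h].
  + apply (proj2 (HF r' Fr') _ _ b); auto.
  + apply (proj2 (HF r Fr) _ _ b); auto.
Qed.

(* A maximal partial bijection is total on one of the two sides. *)
Lemma card_le_total A B : card_le A B \/ card_le B A.
Proof.
destruct (zorn_chain_union (A * B) partial_bij (fun F h1 h2 => partial_bij_chain_union F h1 h2))
  as [M [PM Mmax]].
destruct (classic (forall a, exists b, M (a, b))) as [HA|HA].
{ left. apply (card_le_rel (fun a b => M (a, b))); auto.
  intros a a' b h h'. apply (proj2 PM a a' b); auto. }
destruct (classic (forall b, exists a, M (a, b))) as [HB|HB].
{ right. apply (card_le_rel (fun b a => M (a, b))); auto.
  intros b b' a h h'. apply (proj1 PM a b b'); auto. }
exfalso. apply not_all_ex_not in HA as [a0 Ha0]. apply not_all_ex_not in HB as [b0 Hb0].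
set (M' := fun t => M t \/ t = (a0, b0)).
assert (PM' : partial_bij M').
{ split.
  - intros a b b' [h|h] [h'|h'].
    + apply (proj1 PM a); auto.
    + injection h'; intros; subst. exfalso; apply Ha0; exists b; auto.
    + injection h; intros; subst. exfalso; apply Ha0; exists b'; auto.
    + injection h; injection h'; intros; subst; auto.
  - intros a a' b [h|h] [h'|h'].
    + apply (proj2 PM a a' b); auto.
    + injection h'; intros; subst. exfalso; apply Hb0; exists a; auto.
    + injection h; intros; subst. exfalso; apply Hb0; exists a'; auto.
    + injection h; injection h'; intros; subst; auto. }
apply Ha0. exists b0. exact (Mmax M' (fun t h => or_introl h) PM' (a0, b0) (or_intror eq_refl)).
Qed.

Lemma disjoint_family_maximal {T} (good : (T -> Prop) -> Prop) :
  exists F : (T -> Prop) -> Prop,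
    (forall B, F B -> good B) /\
    (forall B B' y, F B -> F B' -> B y -> B' y -> B = B') /\
    (forall B, good B -> (forall y, B y -> forall B', F B' -> ~ B' y) -> forall y, ~ B y).
Proof.
set (Disj := fun F : (T -> Prop) -> Prop => (forall B, F B -> good B) /\
  (forall B B' y, F B -> F B' -> B y -> B' y -> B = B')).
destruct (zorn_chain_union _ Disj) as [F [[Fgood Fdisj] Fmax]].
{ intros FF HFF Htot. split.
  - intros B [F' [hF' hB]]. exact (proj1 (HFF F' hF') B hB).
  - intros B B' y [F1 [h1 hB]] [F2 [h2 hB']] By B'y.
    destruct (Htot F1 F2 h1 h2) as [i|i].
    + apply (proj2 (HFF F2 h2) B B' y); auto.
    + apply (proj2 (HFF F1 h1) B B' y); auto. }
exists F. split; [exact Fgood | split; [exact Fdisj|]].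
intros B gB Bfree y By.
set (F' := fun B' => F B' \/ B' = B).
assert (DF' : Disj F').
{ split.
  - intros B' [h|h]; [auto | subst; auto].
  - intros B1 B2 z [h1|h1] [h2|h2] z1 z2; subst.
    + apply (Fdisj B1 B2 z); auto.
    + exfalso. exact (Bfree z z2 B1 h1 z1).
    + exfalso. exact (Bfree z z1 B2 h2 z2).
    + reflexivity. }
exact (Bfree y By B (Fmax F' (fun t h => or_introl h) DF' B (or_intror eq_refl)) By).
Qed.

Lemma countably_infinite_enum {Z} (B : Z -> Prop) :
  card_le nat {y | B y} -> card_le {y | B y} nat ->
  exists e : nat -> Z, injective e /\ forall y, B y <-> exists n, e n = y.
Proof.
intros h1 h2. destruct (schroeder_bernstein _ _ h1 h2) as [e [ei es]].
exists (fun n => proj1_sig (e n)). split.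
- intros n m h. apply ei, proj1_sig_inj, h.
- intro y. split.
  + intro By. destruct (es (exist _ y By)) as [n en]. exists n. rewrite en. reflexivity.
  + intros [n <-]. exact (proj2_sig (e n)).
Qed.

Section CardMulNat.
Variables (Z : Type) (F : (Z -> Prop) -> Prop).
Let countably_infinite (B : Z -> Prop) := card_le nat {y | B y} /\ card_le {y | B y} nat.
Hypothesis Fgood : forall B, F B -> countably_infinite B.
Hypothesis Fdisj : forall B B' y, F B -> F B' -> B y -> B' y -> B = B'.
Hypothesis Fmax : forall B, countably_infinite B ->
  (forall y, B y -> forall B', F B' -> ~ B' y) -> forall y, ~ B y.

Let Rest y := forall B, F B -> ~ B y.
Let Fam := {B | F B}.

Lemma family_remainder_countable : card_le {y | Rest y} nat.
Proof.
destruct (card_le_total {y | Rest y} nat) as [h | [g Hg]]; [exact h | exfalso].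
set (Img := fun y => exists n, proj1_sig (g n) = y).
refine (Fmax Img _ _ (proj1_sig (g 0)) (ex_intro _ 0 eq_refl)).
- split.
  + exists (fun n => exist Img (proj1_sig (g n)) (ex_intro _ n eq_refl)).
    intros n m h. apply Hg, proj1_sig_inj. exact (f_equal (@proj1_sig _ _) h).
  + apply (card_le_rel (fun (y : {y | Img y}) n => proj1_sig (g n) = proj1_sig y)).
    * intros [y [n e]]. exists n. exact e.
    * intros y y' n e e'. apply proj1_sig_inj. congruence.
- intros y [n <-] B FB By. exact (proj2_sig (g n) B FB By).
Qed.

Lemma family_decomposition : card_le (Fam * nat) Z /\ card_le Z (Fam * nat + {y | Rest y}).
Proof.
destruct (choice (fun (B : Fam) (e : nat -> Z) =>
  injective e /\ forall y, proj1_sig B y <-> exists n, e n = y)) as [en Hen].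
{ intros [B FB]. destruct (Fgood B FB) as [h1 h2]. exact (countably_infinite_enum B h1 h2). }
split.
- exists (fun p => en (fst p) (snd p)). intros [B n] [B' n'] h. simpl in h.
  assert (EB : B = B').
  { apply proj1_sig_inj. apply (Fdisj _ _ (en B n) (proj2_sig B) (proj2_sig B')).
    - apply (proj2 (Hen B)). exists n. reflexivity.
    - apply (proj2 (Hen B')). exists n'. symmetry. exact h. }
  subst B'. f_equal. exact (proj1 (Hen B) _ _ h).
- apply (card_le_rel (fun y t => match t with
    | inl p => en (fst p) (snd p) = y | inr r => proj1_sig r = y end)).
  + intro y. destruct (classic (Rest y)) as [ry | ny].
    * exists (inr (exist _ y ry)). reflexivity.
    * apply not_all_ex_not in ny as [B nB]. apply imply_to_and in nB as [FB By].
      apply NNPP in By.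
      destruct (proj1 (proj2 (Hen (exist _ B FB)) y) By) as [n e].
      exists (inl (exist _ B FB, n)). exact e.
  + intros y y' [p|r] h h'; congruence.
Qed.

Lemma family_nonempty : card_le nat Z -> card_le nat (Fam * nat).
Proof.
intros [e He]. destruct (classic (exists B, F B)) as [[B FB] | NF].
{ exists (fun n => (exist _ B FB, n)). intros n m h. injection h; auto. }
exfalso. refine (Fmax (fun _ => True) _ _ (e 0) I); [split|].
- exists (fun n => exist (fun _ => True) (e n) I). intros n m h.
  apply He. exact (f_equal (@proj1_sig _ _) h).
- apply (card_le_trans _ {y | Rest y}); [|exact family_remainder_countable].
  apply card_le_sig_sub. intros y _ B FB _. apply NF. exists B. exact FB.
- intros y _ B FB _. apply NF. exists B. exact FB.
Qed.

End CardMulNat.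

(* Partition an infinite [Z] into countably infinite pieces plus a countable remainder. *)
Lemma card_mul_nat Z : card_le nat Z -> card_le (Z * nat) Z.
Proof.
intro HZ.
destruct (disjoint_family_maximal
  (fun B : Z -> Prop => card_le nat {y | B y} /\ card_le {y | B y} nat)) as [F [Fgood [Fdisj Fmax]]].
set (Fam := {B | F B}).
destruct (family_decomposition Z F Fgood Fdisj) as [FamZ ZFam].
assert (RestFam := card_le_trans _ _ _ (family_remainder_countable Z F Fmax)
                     (family_nonempty Z F Fmax HZ)).
apply (card_le_trans _ ((Fam * nat + Fam * nat) * nat)).
{ apply card_le_prod; [|apply card_le_refl].
  apply (card_le_trans _ _ _ ZFam). apply card_le_sum; [apply card_le_refl | exact RestFam]. }
apply (card_le_trans _ (((Fam * nat) * nat) * nat)).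
{ apply card_le_prod; [apply card_le_sum_diag | apply card_le_refl]. }
apply (card_le_trans _ ((Fam * nat) * nat)); [apply card_le_prod_nat_nat|].
apply (card_le_trans _ (Fam * nat)); [apply card_le_prod_nat_nat | exact FamZ].
Qed.

Lemma card_sum_self Z : card_le nat Z -> card_le (Z + Z) Z.
Proof. intro h. apply (card_le_trans _ (Z * nat)); [apply card_le_sum_diag | apply card_mul_nat, h]. Qed.

Lemma card_mul_countable Z C : card_le nat Z -> card_le C nat -> card_le (Z * C) Z.
Proof.
intros h hc. apply (card_le_trans _ (Z * nat)).
- apply card_le_prod; [apply card_le_refl | exact hc].
- apply card_mul_nat, h.
Qed.

Definition rel_bij {Z1 Z2} (P1 : Z1 -> Prop) (P2 : Z2 -> Prop) (G : Z1 -> Z2 -> Prop) :=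
  (forall x u, G x u -> P1 x /\ P2 u) /\ (forall x, P1 x -> exists u, G x u) /\
  (forall u, P2 u -> exists x, G x u) /\ (forall x u u', G x u -> G x u' -> u = u') /\
  (forall x x' u, G x u -> G x' u -> x = x').

(** * Realizing a sequence of partial permutations on a subset *)

Section Realization.
Variables (A : Type) (w : nat -> word A).

Definition realizes {Z} (f : A -> rel Z) (s : nat -> rel Z) (P : Z -> Prop) :=
  (forall a, partial_perm (f a)) /\ (forall a x y, f a x y -> P x /\ P y) /\
  (forall n x y, P x -> P y -> (eval_word f (w n) x y <-> s n x y)).

Definition realizable {Z} (s : nat -> rel Z) (P : Z -> Prop) := exists f, realizes f s P.

Definition eval_from {Z} (f : A -> rel Z) (l : list A) (R : rel Z) : rel Z :=
  fold_left (fun R b => rcomp R (f b)) l R.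

Lemma eval_from_support {Z} (f : A -> rel Z) (P : Z -> Prop) :
  (forall a x y, f a x y -> P x /\ P y) ->
  forall l R, (forall x y, R x y -> P x /\ P y) -> forall x y, eval_from f l R x y -> P x /\ P y.
Proof.
intros H l. induction l as [|a l IH]; simpl; intros R HR x y h; [auto|].
apply (IH (rcomp R (f a))); [|exact h].
intros x' y' [z [h1 h2]]. split; [apply (HR _ _ h1) | apply (H _ _ _ h2)].
Qed.

Lemma eval_word_support {Z} (f : A -> rel Z) (P : Z -> Prop) :
  (forall a x y, f a x y -> P x /\ P y) -> forall u x y, eval_word f u x y -> P x /\ P y.
Proof.
intros H [a l] x y. apply (eval_from_support f P H l (f a)). intros; apply (H a); auto.
Qed.

Section Union.
Variables (Z I : Type) (P : I -> Z -> Prop) (fi : I -> A -> rel Z) (f : A -> rel Z).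
Hypothesis Hdisj : forall i j z, P i z -> P j z -> i = j.
Hypothesis Hf : forall a x y, f a x y <-> exists i, fi i a x y.
Hypothesis Hsup : forall i a x y, fi i a x y -> P i x /\ P i y.

Lemma eval_from_union : forall l (R : rel Z) (Ri : I -> rel Z),
  (forall x y, R x y <-> exists i, Ri i x y) -> (forall i x y, Ri i x y -> P i y) ->
  forall x y, eval_from f l R x y <-> exists i, eval_from (fi i) l (Ri i) x y.
Proof.
intro l. induction l as [|a l IH]; simpl; intros R Ri HR HRi x y; [apply HR|].
apply (IH _ (fun i => rcomp (Ri i) (fi i a))).
- intros x' z. split.
  + intros [m [h1 h2]]. apply HR in h1 as [i h1]. apply Hf in h2 as [j h2].
    assert (i = j) by (apply (Hdisj i j m); [apply (HRi _ _ _ h1) | apply (Hsup _ _ _ _ h2)]).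
    subst. exists j, m. auto.
  + intros [i [m [h1 h2]]]. exists m. split; [apply HR | apply Hf]; exists i; auto.
- intros i x' z [m [h1 h2]]. apply (Hsup _ _ _ _ h2).
Qed.

Lemma eval_word_union u x y : eval_word f u x y <-> exists i, eval_word (fi i) u x y.
Proof.
destruct u as [a l]. apply eval_from_union.
- intros; apply Hf.
- intros i x' y' h. apply (Hsup _ _ _ _ h).
Qed.
End Union.

Section Transport.
Variables (Z1 Z2 : Type) (P1 : Z1 -> Prop) (P2 : Z2 -> Prop) (G : Z1 -> Z2 -> Prop).
Hypothesis HG : rel_bij P1 P2 G.
Variable f1 : A -> rel Z1.
Hypothesis Hsup1 : forall a x y, f1 a x y -> P1 x /\ P1 y.

Definition transport_rel (R : rel Z1) : rel Z2 := fun u v => exists x y, G x u /\ G y v /\ R x y.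

Lemma eval_from_transport : forall l R1 R2,
  (forall u v, R2 u v <-> transport_rel R1 u v) ->
  forall u v, eval_from (fun a => transport_rel (f1 a)) l R2 u v <->
              transport_rel (eval_from f1 l R1) u v.
Proof.
destruct HG as [G1 [G2 [G3 [G4 G5]]]].
intro l. induction l as [|a l IH]; simpl; intros R1 R2 HR u v; [apply HR|].
apply IH. intros u' z. split.
- intros [m [h1 [x2 [y2 [gx2 [gy2 r2]]]]]]. apply HR in h1 as [x [y1 [gx [gy1 r1]]]].
  assert (y1 = x2) by (apply (G5 _ _ m); auto). subst.
  exists x, y2. split; auto. split; auto. exists x2; auto.
- intros [x [y [gx [gy [m' [h1 h2]]]]]].
  destruct (G2 m' (proj1 (Hsup1 _ _ _ h2))) as [m gm].
  exists m. split; [apply HR; exists x, m'; auto | exists m', y; auto].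
Qed.

Lemma eval_word_transport u x y :
  eval_word (fun a => transport_rel (f1 a)) u x y <-> transport_rel (eval_word f1 u) x y.
Proof. destruct u as [a l]. apply eval_from_transport. intros; reflexivity. Qed.
End Transport.

Lemma realizable_transport {Z1 Z2} (P1 : Z1 -> Prop) (P2 : Z2 -> Prop) G s1 s2 :
  rel_bij P1 P2 G -> (forall n x y u v, G x u -> G y v -> (s1 n x y <-> s2 n u v)) ->
  realizable s1 P1 -> realizable s2 P2.
Proof.
intros HG Hiso [f1 [pp1 [sup1 ev1]]].
pose proof HG as [G1 [G2 [G3 [G4 G5]]]].
exists (fun a => transport_rel Z1 Z2 G (f1 a)). split; [|split].
- intro a. split.
  + intros u v v' [x [y [gx [gy h]]]] [x' [y' [gx' [gy' h']]]].
    assert (x = x') by (apply (G5 _ _ u); auto). subst.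
    assert (y = y') by (apply (proj1 (pp1 a) x'); auto). subst. apply (G4 y'); auto.
  + intros u u' v [x [y [gx [gy h]]]] [x' [y' [gx' [gy' h']]]].
    assert (y = y') by (apply (G5 _ _ v); auto). subst.
    assert (x = x') by (apply (proj2 (pp1 a) _ _ y'); auto). subst. apply (G4 x'); auto.
- intros a u v [x [y [gx [gy h]]]]. split; [apply (G1 _ _ gx) | apply (G1 _ _ gy)].
- intros n u v pu pv. destruct (G3 u pu) as [x gx]. destruct (G3 v pv) as [y gy].
  rewrite (eval_word_transport Z1 Z2 P1 P2 G HG f1 sup1), <- (Hiso n x y u v gx gy).
  split.
  + intros [x' [y' [gx' [gy' h]]]].
    assert (x = x') by (apply (G5 _ _ u); auto). assert (y = y') by (apply (G5 _ _ v); auto).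
    subst. apply ev1; auto; [apply (G1 _ _ gx) | apply (G1 _ _ gy)].
  + intro h. exists x, y. repeat split; auto. apply ev1; auto; [apply (G1 _ _ gx) | apply (G1 _ _ gy)].
Qed.

Lemma realizable_ext {Z} (s : nat -> rel Z) (P Q : Z -> Prop) :
  (forall z, P z <-> Q z) -> realizable s P -> realizable s Q.
Proof.
intros E [f [h1 [h2 h3]]]. exists f. split; [exact h1|split].
- intros a x y h. destruct (h2 _ _ _ h). split; apply E; auto.
- intros n x y qx qy. apply h3; apply E; auto.
Qed.

Lemma realizable_empty {Z} (s : nat -> rel Z) : realizable s (fun _ => False).
Proof.
exists (fun _ _ _ => False). split; [|split].
- intro a; split; intros; contradiction.
- intros; contradiction.
- intros; contradiction.
Qed.

Lemma realizable_union {Z I} (s : nat -> rel Z) (P : I -> Z -> Prop) :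
  (forall i j z, P i z -> P j z -> i = j) ->
  (forall i, realizable s (P i)) ->
  (forall n i j x y, P i x -> P j y -> s n x y -> i = j) ->
  realizable s (fun z => exists i, P i z).
Proof.
intros Hd Hr Hb.
destruct (choice (fun i f => realizes f s (P i)) Hr) as [fi Hfi].
set (f := fun a x y => exists i, fi i a x y).
assert (Hsup : forall i a x y, fi i a x y -> P i x /\ P i y) by (intro i; exact (proj1 (proj2 (Hfi i)))).
exists f. split; [|split].
- intro a. split.
  + intros x y y' [i h] [j h']. assert (i = j) by (apply (Hd i j x); [apply (Hsup _ _ _ _ h) | apply (Hsup _ _ _ _ h')]).
    subst. apply (proj1 (proj1 (Hfi j) a) x); auto.
  + intros x x' y [i h] [j h']. assert (i = j) by (apply (Hd i j y); [apply (Hsup _ _ _ _ h) | apply (Hsup _ _ _ _ h')]).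
    subst. apply (proj2 (proj1 (Hfi j) a) x x' y); auto.
- intros a x y [i h]. destruct (Hsup _ _ _ _ h). split; exists i; auto.
- intros n x y [i px] [j py].
  rewrite (eval_word_union Z I P fi f Hd (fun a x y => iff_refl _) Hsup). split.
  + intros [k h]. destruct (eval_word_support (fi k) (P k) (Hsup k) _ _ _ h).
    apply (proj2 (proj2 (Hfi k))); auto.
  + intro h. assert (i = j) by (apply (Hb n i j x y); auto). subst.
    exists j. apply (proj2 (proj2 (Hfi j))); auto.
Qed.

Lemma realizable_restrict {Z} (s : nat -> rel Z) (P Q : Z -> Prop) f :
  realizes f s P -> (forall z, Q z -> P z) ->
  (forall a x y, f a x y -> (Q x <-> Q y)) -> realizable s Q.
Proof.
intros [pp [sup ev]] QP Hc.
set (fi := fun (b : bool) a x y => f a x y /\ (if b then Q x else ~ Q x)).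
set (Pb := fun (b : bool) z => P z /\ (if b then Q z else ~ Q z)).
assert (Hd : forall i j z, Pb i z -> Pb j z -> i = j) by (intros [|] [|] z [_ h] [_ h']; auto; contradiction).
assert (Hf : forall a x y, f a x y <-> exists i, fi i a x y).
{ intros a x y. split.
  - intro h. destruct (classic (Q x)); [exists true | exists false]; split; auto.
  - intros [i [h _]]; auto. }
assert (Hsup : forall i a x y, fi i a x y -> Pb i x /\ Pb i y).
{ intros [|] a x y [h q]; destruct (sup _ _ _ h); unfold Pb; simpl.
  - repeat split; auto. apply (Hc _ _ _ h); auto.
  - repeat split; auto. intro q'. apply q, (Hc _ _ _ h), q'. }
exists (fi true). split; [|split].
- intro a. split.
  + intros x y y' [h _] [h' _]. apply (proj1 (pp a) x); auto.
  + intros x x' y [h _] [h' _]. apply (proj2 (pp a) x x' y); auto.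
- intros a x y h. destruct (Hsup true a x y h) as [[_ h1] [_ h2]]. auto.
- intros n x y qx qy. rewrite <- (ev n x y (QP _ qx) (QP _ qy)).
  rewrite (eval_word_union Z bool Pb fi f Hd Hf Hsup). split.
  + intro h. exists true. exact h.
  + intros [[|] h]; [exact h|].
    destruct (eval_word_support (fi false) (Pb false) (Hsup false) _ _ _ h) as [[_ hx] _].
    contradiction.
Qed.

Lemma rel_bij_of_card_eq {X Z} (P : Z -> Prop) :
  card_le X {z | P z} -> card_le {z | P z} X -> exists G, rel_bij (fun _ : X => True) P G.
Proof.
intros h1 h2. destruct (schroeder_bernstein _ _ h1 h2) as [h [hi hs]].
exists (fun x z => proj1_sig (h x) = z). split; [|split; [|split; [|split]]].
- intros x u <-. split; [exact I | exact (proj2_sig (h x))].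
- intros x _. exists (proj1_sig (h x)). reflexivity.
- intros u pu. destruct (hs (exist _ u pu)) as [x e]. exists x. rewrite e. reflexivity.
- intros x u u' e e'. congruence.
- intros x x' u e e'. apply hi, proj1_sig_inj. congruence.
Qed.

Lemma realizable_of_universal {X Z} (s : nat -> rel Z) (P : Z -> Prop) :
  universal X A w -> card_le X {z | P z} -> card_le {z | P z} X ->
  (forall n, partial_perm (s n)) -> realizable s P.
Proof.
intros U XP PX pps. destruct (rel_bij_of_card_eq P XP PX) as [G HG].
pose proof HG as [G1 [G2 [G3 [G4 G5]]]].
set (s1 := fun n x y => exists u v, G x u /\ G y v /\ s n u v).
assert (iso : forall n x y u v, G x u -> G y v -> (s1 n x y <-> s n u v)).
{ intros n x y u v gx gy. split.
  - intros [u' [v' [gx' [gy' h]]]]. rewrite (G4 _ _ _ gx gx'), (G4 _ _ _ gy gy'). exact h.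
  - intro h. exists u, v. auto. }
apply (realizable_transport (fun _ => True) P G s1 s HG iso).
destruct (U s1) as [f [ppf ev]].
- intro n. split.
  + intros x y y' [u [v [gx [gy h]]]] [u' [v' [gx' [gy' h']]]].
    rewrite (G4 _ _ _ gx gx') in h. assert (v = v') by (apply (proj1 (pps n) u'); auto). subst.
    apply (G5 _ _ v'); auto.
  + intros x x' y [u [v [gx [gy h]]]] [u' [v' [gx' [gy' h']]]].
    rewrite (G4 _ _ _ gy gy') in h. assert (u = u') by (apply (proj2 (pps n) u u' v'); auto). subst.
    apply (G5 _ _ u'); auto.
- exists f. split; [exact ppf | split; [intros; split; exact I |]]. intros n x y _ _. apply ev.
Qed.

Lemma universal_of_realizable_everywhere {Z} :
  (forall s : nat -> rel Z, (forall n, partial_perm (s n)) -> realizable s (fun _ => True)) ->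
  universal Z A w.
Proof.
intros H s pps. destruct (H s pps) as [f [h1 [_ h3]]].
exists f. split; [exact h1|]. intros n x y. apply h3; exact I.
Qed.

End Realization.

(** * Connected components of a family of partial permutations *)

Section Reachability.
Variables (J Z : Type) (r : J -> rel Z).

Definition adjacent (x y : Z) := exists j, r j x y \/ r j y x.
Definition reach := clos_refl_trans Z adjacent.
Definition closure (Q : Z -> Prop) (y : Z) := exists x, Q x /\ reach x y.
Definition stable (Q : Z -> Prop) := forall x y, adjacent x y -> Q x -> Q y.

Lemma adjacent_sym x y : adjacent x y -> adjacent y x.
Proof. intros [j [h|h]]; exists j; auto. Qed.

Lemma reach_sym x y : reach x y -> reach y x.
Proof.
intro h. induction h; [apply rt_step, adjacent_sym; auto | apply rt_refl | eapply rt_trans; eauto].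
Qed.

Lemma stable_back Q : stable Q -> forall x y, adjacent x y -> Q y -> Q x.
Proof. intros H x y h q. apply (H y x); auto. apply adjacent_sym; auto. Qed.

Lemma stable_reach Q : stable Q -> forall x y, reach x y -> Q x -> Q y.
Proof. intros H x y h. induction h; auto. apply H; auto. Qed.

Lemma closure_stable Q : stable (closure Q).
Proof. intros x y h [z [q hz]]. exists z. split; auto. eapply rt_trans; [eauto | apply rt_step; auto]. Qed.

Lemma closure_incl Q x : Q x -> closure Q x.
Proof. intro q. exists x. split; [auto | apply rt_refl]. Qed.

Lemma closure_min Q R : (forall x, Q x -> R x) -> stable R -> forall x, closure Q x -> R x.
Proof. intros H1 H2 x [z [q h]]. apply (stable_reach R H2 z); auto. Qed.

(* [walk x p y]: the path [p] leads from [x] to [y]; [true] steps go forward along [r j]. *)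
Fixpoint walk (x : Z) (p : list (J * bool)) (y : Z) : Prop :=
  match p with
  | nil => x = y
  | (j, b) :: p => exists z, (if b then r j x z else r j z x) /\ walk z p y
  end.

Lemma reach_walk x y : reach x y -> exists p, walk x p y.
Proof.
intro h. apply clos_rt_rt1n in h. induction h as [|x y z [j [hj|hj]] _ [p hp]].
- exists nil. reflexivity.
- exists ((j, true) :: p). exists y. auto.
- exists ((j, false) :: p). exists y. auto.
Qed.

Hypothesis r_pp : forall j, partial_perm (r j).

Lemma walk_fun p : forall x y y', walk x p y -> walk x p y' -> y = y'.
Proof.
induction p as [|[j b] p IH]; simpl; intros x y y' h h'; [congruence|].
destruct h as [z [hz h]]. destruct h' as [z' [hz' h']].
assert (z = z') by (destruct b; [apply (proj1 (r_pp j) x) | apply (proj2 (r_pp j) z z' x)]; auto).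
subst. apply (IH z'); auto.
Qed.

Variable c : J -> nat.
Hypothesis c_inj : injective c.

Fixpoint walk_code (p : list (J * bool)) : nat :=
  match p with
  | nil => 0
  | (j, b) :: p => S (Cantor.to_nat (Cantor.to_nat (c j, if b then 1 else 0), walk_code p))
  end.

Lemma walk_code_inj p q : walk_code p = walk_code q -> p = q.
Proof.
assert (pair_inj : forall a b : nat * nat, Cantor.to_nat a = Cantor.to_nat b -> a = b).
{ intros a b h. rewrite <- (Cantor.cancel_of_to a), <- (Cantor.cancel_of_to b), h. reflexivity. }
revert q. induction p as [|[j b] p IH]; intros [|[j' b'] q]; cbn [walk_code]; intro h;
  try discriminate; [reflexivity|].
apply eq_add_S, pair_inj in h.
pose proof (f_equal snd h) as h2. apply (f_equal fst) in h. cbn [fst snd] in h, h2. apply pair_inj in h.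
pose proof (f_equal snd h) as hb. apply (f_equal fst) in h. cbn [fst snd] in h, hb. apply c_inj in h. subst j'.
rewrite (IH q h2). destruct b, b'; try discriminate; reflexivity.
Qed.

(* A point of [closure Q] is determined by a point of [Q] and the code of a walk. *)
Lemma card_le_closure Q : card_le {y | closure Q y} ({x | Q x} * nat).
Proof.
apply (card_le_rel (fun (y : {y | closure Q y}) (b : {x | Q x} * nat) =>
   exists p, walk (proj1_sig (fst b)) p (proj1_sig y) /\ snd b = walk_code p)).
- intros [y [x [q h]]]. destruct (reach_walk _ _ h) as [p hp].
  exists (exist _ x q, walk_code p). exists p. auto.
- intros y y' [q n] [p [h1 h2]] [p' [h1' h2']]. simpl in *. subst.
  apply walk_code_inj in h2'. subst. apply proj1_sig_inj, (walk_fun p' (proj1_sig q)); auto.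
Qed.

End Reachability.

Arguments adjacent {J Z} r x y.
Arguments reach {J Z} r x y.
Arguments closure {J Z} r Q y.
Arguments stable {J Z} r Q.
Arguments reach_sym {J Z} r x y.
Arguments stable_back {J Z} r Q.
Arguments stable_reach {J Z} r Q.
Arguments closure_stable {J Z} r Q.
Arguments closure_incl {J Z} r Q x.
Arguments closure_min {J Z} r Q R.
Arguments card_le_closure {J Z} r r_pp c c_inj Q.

Lemma eval_from_reach {A Z} (f : A -> rel Z) : forall l R,
  (forall x y, R x y -> reach f x y) -> forall x y, eval_from A f l R x y -> reach f x y.
Proof.
intro l. induction l as [|a l IH]; simpl; intros R HR x y h; [auto|].
apply (IH (rcomp R (f a))); auto. intros x' z [m [h1 h2]].
eapply rt_trans; [apply HR; eauto | apply rt_step; exists a; auto].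
Qed.

Lemma eval_word_reach {A Z} (f : A -> rel Z) u x y : eval_word f u x y -> reach f x y.
Proof.
destruct u as [a l]. apply (eval_from_reach f l (f a)).
intros x' y' h'. apply rt_step. exists a. auto.
Qed.

Lemma card_le_sig_or {T} (P Q : T -> Prop) :
  card_le {z | P z \/ Q z} ({z | P z} + {z | Q z}).
Proof.
apply (card_le_rel (fun (y : {z | P z \/ Q z}) t =>
  match t with inl a => proj1_sig a = proj1_sig y | inr b => proj1_sig b = proj1_sig y end)).
- intros [y [hy|hy]]; [exists (inl (exist _ y hy)) | exists (inr (exist _ y hy))]; reflexivity.
- intros a b [t|t] h h'; apply proj1_sig_inj; congruence.
Qed.

(** * Transfer of universality upwards *)

Section UniversalUp.
Variables (A : Type) (w : nat -> word A) (X Y : Type) (s : nat -> rel Y).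
Hypothesis X_inf : infinite X.
Hypothesis U : universal X A w.
Hypothesis s_pp : forall n, partial_perm (s n).

Definition stable_copy (B : Y -> Prop) :=
  card_le X {y | B y} /\ card_le {y | B y} X /\ stable s B.

Variable F : (Y -> Prop) -> Prop.
Hypothesis F_copy : forall B, F B -> stable_copy B.
Hypothesis F_disj : forall B B' y, F B -> F B' -> B y -> B' y -> B = B'.
Hypothesis F_max : forall B, stable_copy B ->
  (forall y, B y -> forall B', F B' -> ~ B' y) -> forall y, ~ B y.

Let Rest y := forall B, F B -> ~ B y.

Lemma rest_stable : stable s Rest.
Proof. intros x y h rx B FB By. exact (rx B FB (stable_back s B (proj2 (proj2 (F_copy B FB))) x y h By)). Qed.

(* Otherwise the closure of a copy of [X] inside [Rest] could be added to [F]. *)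
Lemma rest_not_large : ~ card_le X {y | Rest y}.
Proof.
intros [e He]. pose proof X_inf as [x0 _].
set (B := closure s (fun y => exists x, proj1_sig (e x) = y)).
assert (B_rest : forall y, B y -> Rest y).
{ apply (closure_min s); [intros y [x <-]; exact (proj2_sig (e x)) | exact rest_stable]. }
refine (F_max B _ _ (proj1_sig (e (x0 0))) (closure_incl s _ _ (ex_intro _ _ eq_refl)));
  [split; [|split] | intros y By B' FB' B'y; exact (B_rest y By B' FB' B'y)].
- apply (card_le_rel (fun x (y : {y | B y}) => proj1_sig (e x) = proj1_sig y)).
  + intro x. exists (exist _ _ (closure_incl s _ _ (ex_intro _ x eq_refl))). reflexivity.
  + intros x x' y h h'. apply He, proj1_sig_inj. congruence.
- apply (card_le_trans _ _ _ (card_le_closure s s_pp (fun n => n) (fun _ _ h => h) _)).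
  apply (card_le_trans _ (X * nat)); [apply card_le_prod; [|apply card_le_refl] | apply card_mul_nat, X_inf].
  apply (card_le_rel (fun (y : {y | exists x, proj1_sig (e x) = y}) x => proj1_sig (e x) = proj1_sig y)).
  + intros [y [x hx]]. exists x. exact hx.
  + intros y y' x h h'. apply proj1_sig_inj. congruence.
- apply closure_stable.
Qed.

Hypothesis XY : card_le X Y.

Lemma family_inhabited : exists B0, F B0.
Proof.
apply NNPP. intro NF. apply rest_not_large. apply (card_le_trans _ _ _ XY).
assert (Rall : forall y, Rest y) by (intros y B FB _; apply NF; exists B; exact FB).
exists (fun y => exist Rest y (Rall y)). intros y y' h. exact (f_equal (@proj1_sig _ _) h).
Qed.

Lemma realizable_everywhere_of_family : realizable A w s (fun _ => True).
Proof.
destruct family_inhabited as [B0 FB0].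
assert (Rest_X : card_le {y | Rest y} X).
{ destruct (card_le_total {y | Rest y} X) as [h|h]; [exact h | contradiction (rest_not_large h)]. }
set (Piece := fun (B : Y -> Prop) y => F B /\ (B y \/ (B = B0 /\ Rest y))).
assert (Piece_disj : forall B B' y, Piece B y -> Piece B' y -> B = B').
{ intros B B' y [FB [hB|[eB rB]]] [FB' [hB'|[eB' rB']]].
  - apply (F_disj B B' y); auto.
  - contradiction (rB' B FB hB).
  - contradiction (rB B' FB' hB').
  - congruence. }
apply (realizable_ext A w s (fun y => exists B, Piece B y)).
{ intro y. split; [auto|]. intros _. destruct (classic (Rest y)) as [ry|ny].
  - exists B0. split; [exact FB0 | right; auto].
  - apply not_all_ex_not in ny as [B nB]. apply imply_to_and in nB as [FB By].
    exists B. split; [exact FB | left; apply NNPP, By]. }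
apply realizable_union; [exact Piece_disj | |].
- intro B. destruct (classic (F B)) as [FB|NFB].
  2: { apply (realizable_ext A w s (fun _ => False)); [|apply realizable_empty].
       intro y; split; [contradiction | intros [h _]; contradiction]. }
  destruct (F_copy B FB) as [XB [BX _]].
  destruct (classic (B = B0)) as [->|ne].
  + apply (realizable_ext A w s (fun y => B0 y \/ Rest y)).
    { intro y. unfold Piece. split; [intros [h|h]; auto | intros [_ [h|[_ h]]]; auto]. }
    apply (realizable_of_universal A w s _ U); [| |exact s_pp].
    * apply (card_le_trans _ _ _ XB). apply card_le_sig_sub. intros y h. left. exact h.
    * apply (card_le_trans _ _ _ (card_le_sig_or _ _)).
      apply (card_le_trans _ (X + X)); [apply card_le_sum; auto | apply card_sum_self, X_inf].
  + apply (realizable_ext A w s B).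
    { intro y; unfold Piece. split; [intro; split; auto | intros [_ [h|[h _]]]; [auto | contradiction]]. }
    exact (realizable_of_universal A w s B U XB BX s_pp).
- intros n B B' x y [FB hx] hy hs.
  assert (st : adjacent s x y) by (exists n; auto).
  apply (Piece_disj B B' y); [split; [exact FB|] | exact hy].
  destruct hx as [hx|[eB rx]].
  + left. exact (proj2 (proj2 (F_copy B FB)) x y st hx).
  + right. split; [exact eB | exact (rest_stable x y st rx)].
Qed.

End UniversalUp.

Lemma universal_upward (A : Type) (w : nat -> word A) X Y :
  infinite X -> card_le X Y -> universal X A w -> universal Y A w.
Proof.
intros X_inf XY U. apply universal_of_realizable_everywhere. intros s s_pp.
destruct (disjoint_family_maximal (stable_copy X Y s)) as [F [F_copy [F_disj F_max]]].
exact (realizable_everywhere_of_family A w X Y s X_inf U s_pp F F_copy F_disj F_max XY).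
Qed.

(** * The continuum *)

Notation continuum := (nat -> bool) (only parsing).

Lemma card_le_nat_continuum : card_le nat continuum.
Proof.
exists (fun n k => Nat.eqb k n). intros a b h.
assert (E := f_equal (fun f => f a) h). cbv beta in E.
rewrite Nat.eqb_refl in E. symmetry in E. apply Nat.eqb_eq in E. auto.
Qed.

Lemma card_le_continuum_pair : card_le (continuum * continuum) continuum.
Proof.
exists (fun p k => if Nat.even k then fst p (Nat.div2 k) else snd p (Nat.div2 k)).
intros [f g] [f' g'] h.
assert (E1 : forall k, f k = f' k).
{ intro k. assert (E := f_equal (fun F => F (2 * k)) h). cbv beta in E.
  rewrite Nat.even_even, Nat.div2_double in E. exact E. }
assert (E2 : forall k, g k = g' k).
{ intro k. assert (E := f_equal (fun F => F (2 * k + 1)) h). cbv beta in E.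
  rewrite Nat.even_odd, Nat.div2_odd' in E. exact E. }
apply functional_extensionality in E1, E2. subst. reflexivity.
Qed.

Lemma card_le_continuum_nat : card_le (continuum * nat) continuum.
Proof.
apply (card_le_trans _ (continuum * continuum)); [|apply card_le_continuum_pair].
apply card_le_prod; [apply card_le_refl | apply card_le_nat_continuum].
Qed.

Lemma card_le_continuum_sum : card_le (continuum + continuum) continuum.
Proof. apply (card_le_trans _ (continuum * nat)); [apply card_le_sum_diag | apply card_le_continuum_nat]. Qed.

Lemma card_le_pred_nat : card_le (nat -> Prop) continuum.
Proof.
exists (fun p k => if excluded_middle_informative (p k) then true else false).
intros p p' h. apply functional_extensionality. intro k. apply propositional_extensionality.
assert (E := f_equal (fun F => F k) h). cbv beta in E.
destruct (excluded_middle_informative (p k)), (excluded_middle_informative (p' k));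
  try discriminate; tauto.
Qed.

Lemma card_le_ternary_pred : card_le (nat -> nat -> nat -> Prop) continuum.
Proof.
apply (card_le_trans _ (nat -> Prop)); [|exact card_le_pred_nat].
exists (fun (c : nat -> nat -> nat -> Prop) k =>
  let (a, b) := Cantor.of_nat k in let (i, j) := Cantor.of_nat b in c a i j : Prop).
intros c c' h.
apply functional_extensionality. intro a. apply functional_extensionality. intro i.
apply functional_extensionality. intro j.
assert (E := f_equal (fun F => F (Cantor.to_nat (a, Cantor.to_nat (i, j)))) h). cbv beta in E.
rewrite !Cantor.cancel_of_to in E. exact E.
Qed.

Lemma surjection_of_countable {T} (t0 : T) :
  card_le T nat -> exists g : nat -> T, surjective g.
Proof.
intros [k Hk]. exists (fun n => epsilon (inhabits t0) (fun t => k t = n)).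
intro t. exists (k t). apply Hk, (epsilon_spec (inhabits t0) (fun t' => k t' = k t)). exists t. reflexivity.
Qed.

(** * Components and their isomorphism types *)

Section Components.
Variables (X : Type) (s : nat -> rel X).
Hypothesis s_pp : forall n, partial_perm (s n).

Definition rep (x : X) : X := epsilon (inhabits x) (reach s x).

Lemma reach_rep x : reach s x (rep x).
Proof. apply (epsilon_spec (inhabits x) (reach s x)). exists x. apply rt_refl. Qed.

Lemma rep_reach x : reach s (rep x) x.
Proof. apply reach_sym, reach_rep. Qed.

Lemma rep_eq x x' : reach s x x' -> rep x = rep x'.
Proof.
intro h. unfold rep.
assert (E : reach s x = reach s x').
{ apply functional_extensionality. intro y. apply propositional_extensionality. split; intro h'.
  - eapply rt_trans; [apply reach_sym, h | exact h'].
  - eapply rt_trans; [exact h | exact h']. }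
rewrite E. f_equal. apply proof_irrelevance.
Qed.

Lemma rep_idem x : rep (rep x) = rep x.
Proof. symmetry. apply rep_eq, reach_rep. Qed.

Lemma rep_adjacent n x y : s n x y -> rep x = rep y.
Proof. intro h. apply rep_eq, rt_step. exists n. auto. Qed.

Lemma rep_of_reach m x : rep m = m -> reach s m x -> rep x = m.
Proof. intros h1 h2. rewrite <- h1. symmetry. apply rep_eq, h2. Qed.

Lemma component_countable x : card_le {y | reach s x y} nat.
Proof.
apply (card_le_trans _ {y | closure s (fun z => z = x) y}).
{ apply card_le_sig_sub. intros y h. exists x. auto. }
apply (card_le_trans _ _ _ (card_le_closure s s_pp (fun n => n) (fun _ _ h => h) _)).
exists snd. intros [a n] [b m] h. simpl in h. subst. f_equal.
apply proj1_sig_inj. rewrite (proj2_sig a), (proj2_sig b). reflexivity.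
Qed.

Lemma enum_exists : exists e : X -> nat -> X, forall x,
  (forall i, reach s x (e x i)) /\ (forall y, reach s x y -> exists i, e x i = y).
Proof.
destruct (dependent_choice (fun x => nat -> {y | reach s x y}) (fun x g => surjective g)) as [g Hg].
{ intro x. exact (surjection_of_countable (exist _ x (rt_refl _ _ x)) (component_countable x)). }
exists (fun x i => proj1_sig (g x i)). intro x. split.
- intro i. exact (proj2_sig (g x i)).
- intros y h. destruct (Hg x (exist _ y h)) as [i e]. exists i. rewrite e. reflexivity.
Qed.

Definition enum : X -> nat -> X := proj1_sig (constructive_indefinite_description _ enum_exists).

Lemma enum_reach x i : reach s x (enum x i).
Proof. exact (proj1 (proj2_sig (constructive_indefinite_description _ enum_exists) x) i). Qed.

Lemma enum_surj x y : reach s x y -> exists i, enum x i = y.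
Proof. exact (proj2 (proj2_sig (constructive_indefinite_description _ enum_exists) x) y). Qed.

(* [code x 0] is the equality and [code x (S n)] the relation [s n] on the component of [x],
   read through [enum x]: components with equal codes are isomorphic. *)
Definition code (x : X) : nat -> nat -> nat -> Prop := fun n i j =>
  match n with 0 => enum x i = enum x j | S m => s m (enum x i) (enum x j) end.

Definition comp_iso (r m u v : X) := exists i, enum r i = u /\ enum m i = v.

Lemma comp_iso_bij r m : code r = code m -> rel_bij (reach s r) (reach s m) (comp_iso r m).
Proof.
intro hc.
assert (E0 : forall i j, enum r i = enum r j <-> enum m i = enum m j).
{ intros i j. assert (E := f_equal (fun c => c 0 i j) hc). simpl in E. rewrite E. reflexivity. }
split; [|split; [|split; [|split]]].
- intros u v [i [<- <-]]. split; apply enum_reach.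
- intros u hu. destruct (enum_surj _ _ hu) as [i hi]. exists (enum m i), i. auto.
- intros v hv. destruct (enum_surj _ _ hv) as [i hi]. exists (enum r i), i. auto.
- intros u v v' [i [h1 <-]] [j [h1' <-]]. apply E0. congruence.
- intros u u' v [i [<- h2]] [j [<- h2']]. apply E0. congruence.
Qed.

Lemma comp_iso_hom r m n u u' v v' : code r = code m ->
  comp_iso r m u u' -> comp_iso r m v v' -> (s n u v <-> s n u' v').
Proof.
intros hc [i [<- <-]] [j [<- <-]].
assert (E := f_equal (fun c => c (S n) i j) hc). simpl in E. rewrite E. reflexivity.
Qed.

Lemma comp_iso_rep r m u v : comp_iso r m u v -> rep m = m -> rep v = m.
Proof. intros [i [_ <-]] hm. apply rep_of_reach; [exact hm | apply enum_reach]. Qed.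

Lemma comp_iso_dom r m u v : comp_iso r m u v -> reach s r u.
Proof. intros [i [<- _]]. apply enum_reach. Qed.

End Components.

(** * A small piece of [Y] carrying copies of a component *)

Section SmallCopies.
Variables (A : Type) (w : nat -> word A) (c : A -> nat).
Hypothesis c_inj : injective c.
Variables (X : Type) (s : nat -> rel X).
Hypothesis s_pp : forall n, partial_perm (s n).
Variable Y : Type.
Hypothesis U : universal Y A w.
Hypothesis Y_inf : infinite Y.
Variables (W : Type) (sW : nat -> rel W).
Hypothesis sW_pp : forall n, partial_perm (sW n).
Hypothesis WY : card_le W Y.
Variables (r : X) (y0 : Y).

Definition component := {x | reach s r x}.

(* [W] together with one copy of the component of [r] for every point of [Y]. *)
Definition copies := (W + Y * component)%type.

Definition s_copies (n : nat) : rel copies := fun u v =>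
  match u, v with
  | inl a, inl b => sW n a b
  | inr (y, c1), inr (y', c2) => y = y' /\ s n (proj1_sig c1) (proj1_sig c2)
  | _, _ => False
  end.

Lemma s_copies_pp n : partial_perm (s_copies n).
Proof.
split.
- intros [a|[y c1]] [b|[y' c2]] [b'|[y'' c3]]; simpl; intros h h'; try contradiction.
  + rewrite (proj1 (sW_pp n) a b b'); auto.
  + destruct h, h'. subst. f_equal. f_equal. apply proj1_sig_inj, (proj1 (s_pp n) (proj1_sig c1)); auto.
- intros [a|[y c1]] [b|[y' c2]] [b'|[y'' c3]]; simpl; intros h h'; try contradiction.
  + rewrite (proj2 (sW_pp n) a b b'); auto.
  + destruct h, h'. subst. f_equal. f_equal. apply proj1_sig_inj, (proj2 (s_pp n) _ _ (proj1_sig c3)); auto.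
Qed.

Definition root : component := exist _ r (rt_refl _ _ r).

Lemma reach_copies y x x' : reach s x x' -> forall (hx : reach s r x) (hx' : reach s r x'),
  reach s_copies (inr (y, exist _ x hx)) (inr (y, exist _ x' hx')).
Proof.
intro h. induction h as [x x' [n st] | x | x m x' h1 IH1 h2 IH2]; intros hx hx'.
- apply rt_step. exists n. destruct st; [left | right]; simpl; auto.
- rewrite (proof_irrelevance _ hx hx'). apply rt_refl.
- assert (hm : reach s r m) by exact (rt_trans _ _ r x m hx h1).
  eapply rt_trans; [apply (IH1 hx hm) | apply (IH2 hm hx')].
Qed.

Lemma card_copies : card_le Y copies /\ card_le copies Y.
Proof.
split.
- exists (fun y => inr (y, root)). intros a b h. injection h; auto.
- apply (card_le_trans _ (Y + Y)); [apply card_le_sum; [exact WY|] | apply card_sum_self, Y_inf].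
  apply card_mul_countable; [exact Y_inf | apply component_countable, s_pp].
Qed.

(* Realize [s_copies] on all of [copies] and keep the part reachable from [W] and [(y0, root)]:
   it is countable over [W], and a union of whole copies. *)
Lemma small_copies_realizable : exists S : Y -> Prop,
  S y0 /\ card_le {y | S y} ((W + unit) * nat) /\
  realizable A w s_copies (fun z => match z with inl _ => True | inr p => S (fst p) end).
Proof.
destruct card_copies as [Yc cY].
destruct (realizable_of_universal A w s_copies (fun _ => True) U) as [f Hf];
  [ apply (card_le_trans _ _ _ Yc); exists (fun z => exist _ z I); intros a b h;
    exact (f_equal (@proj1_sig _ _) h)
  | apply (card_le_trans _ _ _ (card_le_sig _) cY)
  | exact s_copies_pp | ].
set (Q0 := fun z : copies => (exists a, z = inl a) \/ z = inr (y0, root)).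
set (D := closure f Q0).
assert (D_stable : stable s_copies D).
{ intros u v [n st] du. apply (stable_reach f D (closure_stable f Q0) u); [|exact du].
  destruct st as [st|st]; [|apply reach_sym];
    apply (eval_word_reach f (w n)), (proj2 (proj2 Hf)); auto. }
assert (D_copy : forall y (cc : component), D (inr (y, cc)) <-> D (inr (y, root))).
{ intros y [x hx].
  assert (R1 := reach_copies y r x hx (rt_refl _ _ r) hx).
  split; intro h; [apply (stable_reach _ D D_stable _ _ (reach_sym _ _ _ R1) h)
                  | apply (stable_reach _ D D_stable _ _ R1 h)]. }
exists (fun y => D (inr (y, root))). split; [|split].
- apply closure_incl. right. reflexivity.
- apply (card_le_trans _ {z | D z}).
  { exists (fun y => exist D (inr (proj1_sig y, root)) (proj2_sig y)).
    intros a b h. apply proj1_sig_inj. apply (f_equal (@proj1_sig _ _)) in h. injection h; auto. }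
  apply (card_le_trans _ _ _ (card_le_closure f (proj1 Hf) c c_inj Q0)).
  apply card_le_prod; [|apply card_le_refl].
  apply (card_le_rel (fun (z : {z | Q0 z}) (t : W + unit) =>
      match t with inl a => proj1_sig z = inl a | inr _ => proj1_sig z = inr (y0, root) end)).
  + intros [z [[a e]|e]]; [exists (inl a) | exists (inr tt)]; exact e.
  + intros a b [t|t] h h'; apply proj1_sig_inj; congruence.
- apply (realizable_ext A w s_copies D).
  { intros [a|[y cc]]; simpl; [|apply D_copy].
    split; [auto | intros _; apply closure_incl; left; exists a; reflexivity]. }
  apply (realizable_restrict A w s_copies (fun _ => True) D f Hf); [auto|].
  intros a x y h. split; intro hd.
  + apply (closure_stable f Q0 x y); [exists a; left; exact h | exact hd].
  + apply (stable_back f D (closure_stable f Q0) x y); [exists a; left; exact h | exact hd].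
Qed.

End SmallCopies.

(** * Transfer of universality downwards *)

Section UniversalDown.
Variables (A : Type) (w : nat -> word A) (c : A -> nat).
Hypothesis c_inj : injective c.
Variables (X : Type) (s : nat -> rel X).
Hypothesis s_pp : forall n, partial_perm (s n).
Variable Y : Type.
Hypothesis U : universal Y A w.
Hypothesis continuum_X : card_lt continuum X.
Hypothesis XY : card_le X Y.

Local Notation rep := (rep X s).
Local Notation code := (code X s s_pp).
Local Notation Code := (nat -> nat -> nat -> Prop).

Definition of_code (t : Code) (m : X) := rep m = m /\ code m = t.
Definition rare (t : Code) := ~ card_le nat {m | of_code t m}.
Definition in_rare (x : X) := rare (code (rep x)).

Lemma of_code_rep x : of_code (code (rep x)) (rep x).
Proof. split; [apply rep_idem | reflexivity]. Qed.

Lemma Y_inf : infinite Y.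
Proof.
apply (card_le_trans _ _ _ card_le_nat_continuum), (card_le_trans _ X); [apply continuum_X | exact XY].
Qed.

(* A point is determined by the code of its component, the rank of that component among the
   components with this code, and its rank in the enumeration of its component. *)
Lemma card_le_by_code (P : X -> Prop) T (K : forall t, {m | of_code t m} -> T) :
  (forall x, P x -> injective (K (code (rep x)))) -> card_le {x | P x} (Code * (T * nat)).
Proof.
intro HK.
apply (card_le_rel (fun (x : {x | P x}) (p : Code * (T * nat)) =>
   fst p = code (rep (proj1_sig x)) /\
   exists hm : of_code (fst p) (rep (proj1_sig x)),
     fst (snd p) = K (fst p) (exist _ _ hm) /\ enum X s s_pp (rep (proj1_sig x)) (snd (snd p)) = proj1_sig x)).
- intros [x hx]. simpl.
  destruct (enum_surj X s s_pp (rep x) x (rep_reach X s x)) as [j hj].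
  exists (code (rep x), (K _ (exist _ _ (of_code_rep x)), j)). simpl.
  split; [reflexivity | exists (of_code_rep x); auto].
- intros [x hx] [x' hx'] [t [i j]] [e1 [hm [e2 e3]]] [e1' [hm' [e2' e3']]]. simpl in *.
  apply proj1_sig_inj. simpl. rewrite <- e3, <- e3'.
  assert (E : exist (of_code t) (rep x) hm = exist (of_code t) (rep x') hm')
    by (subst t; apply (HK x hx); congruence).
  apply (f_equal (@proj1_sig _ _)) in E. simpl in E. rewrite E. reflexivity.
Qed.

Lemma card_le_rare : card_le {x | in_rare x} continuum.
Proof.
destruct (dependent_choice (fun t => {m | of_code t m} -> nat) (fun t k => rare t -> injective k)) as [K HK].
{ intro t. destruct (classic (rare t)) as [f|f].
  - destruct (card_le_total nat {m | of_code t m}) as [h | [k hk]]; [contradiction | exists k; auto].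
  - exists (fun _ => 0). intro; contradiction. }
apply (card_le_trans _ _ _ (card_le_by_code in_rare nat K (fun x hx => HK _ hx))).
apply (card_le_trans _ (continuum * (nat * nat))); [apply card_le_prod; [apply card_le_ternary_pred | apply card_le_refl]|].
apply (card_le_trans _ (continuum * nat)); [|apply card_le_continuum_nat].
apply card_le_prod; [apply card_le_refl | apply card_le_nat_pair].
Qed.

(* Otherwise [X] would inject into [Code * (continuum * nat)]. *)
Lemma abundant_code_exists : exists rho, ~ card_le {m | of_code rho m} continuum.
Proof.
apply NNPP. intro H.
destruct (dependent_choice (fun t => {m | of_code t m} -> continuum) (fun t k => injective k)) as [K HK].
{ intro t. apply NNPP. intro h. apply H. exists t. intros [k hk]. apply h. exists k. exact hk. }
apply (proj2 continuum_X).
apply (card_le_trans _ {x : X | True}).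
{ exists (fun x => exist _ x I). intros a b h. exact (f_equal (@proj1_sig _ _) h). }
apply (card_le_trans _ _ _ (card_le_by_code (fun _ => True) continuum K (fun x _ => HK _))).
apply (card_le_trans _ (continuum * (continuum * nat))); [apply card_le_prod; [apply card_le_ternary_pred | apply card_le_refl]|].
apply (card_le_trans _ (continuum * continuum)); [|apply card_le_continuum_pair].
apply card_le_prod; [apply card_le_refl | apply card_le_continuum_nat].
Qed.


Variable rho : Code.
Hypothesis rho_abundant : ~ card_le {m | of_code rho m} continuum.

Lemma rho_not_rare : ~ rare rho.
Proof.
intro f. destruct (card_le_total nat {m | of_code rho m}) as [h|h]; [contradiction|].
apply rho_abundant, (card_le_trans _ nat _ h), card_le_nat_continuum.
Qed.

Lemma continuum_le_rho : card_le continuum {m | of_code rho m}.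
Proof. destruct (card_le_total continuum {m | of_code rho m}) as [h|h]; [exact h | contradiction]. Qed.

Definition Rare := {x | in_rare x}.
Definition s_rare (n : nat) : rel Rare := fun a b => s n (proj1_sig a) (proj1_sig b).

Lemma s_rare_pp n : partial_perm (s_rare n).
Proof.
split.
- intros a b b' h h'. apply proj1_sig_inj, (proj1 (s_pp n) (proj1_sig a)); auto.
- intros a a' b h h'. apply proj1_sig_inj, (proj2 (s_pp n) _ _ (proj1_sig b)); auto.
Qed.

Variable r0 : X.
Hypothesis r0_rho : of_code rho r0.
Variable S : Y -> Prop.
Hypothesis S_real : realizable A w (s_copies X s Y Rare s_rare r0)
  (fun z => match z with inl _ => True | inr p => S (fst p) end).
Hypothesis S_small : card_le {y | S y} ((Rare + unit) * nat).

Lemma S_continuum : card_le {y | S y} continuum.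
Proof.
apply (card_le_trans _ _ _ S_small), (card_le_trans _ ((continuum + continuum) * nat)).
- apply card_le_prod; [apply card_le_sum; [exact card_le_rare|] | apply card_le_refl].
  exists (fun _ _ => true). intros [] [] _. reflexivity.
- apply (card_le_trans _ (continuum * nat)); [|apply card_le_continuum_nat].
  apply card_le_prod; [apply card_le_continuum_sum | apply card_le_refl].
Qed.

(* [iota] sends each copy [(y, _)], [S y], to a distinct component of code [rho]. *)
Variable iota : {y | S y} -> {m | of_code rho m}.
Hypothesis iota_inj : injective iota.

Local Notation target j := (proj1_sig (iota j)).

Lemma code_target j : code r0 = code (target j).
Proof. rewrite (proj2 r0_rho). symmetry. exact (proj2 (proj2_sig (iota j))). Qed.

Lemma target_rep j : rep (target j) = target j.
Proof. exact (proj1 (proj2_sig (iota j))). Qed.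

Lemma rare_not_rho x : in_rare x -> ~ of_code rho (rep x).
Proof. intros hx [_ hc]. apply rho_not_rare. unfold in_rare in hx. rewrite hc in hx. exact hx. Qed.

Definition base x := in_rare x \/ exists j, target j = rep x.

Definition base_iso (z : copies X s Y Rare r0) (x : X) : Prop :=
  match z with
  | inl a => proj1_sig a = x
  | inr p => exists hy : S (fst p), comp_iso X s s_pp r0 (target (exist _ (fst p) hy)) (proj1_sig (snd p)) x
  end.

Lemma base_iso_rep y hy u x :
  comp_iso X s s_pp r0 (target (exist S y hy)) u x -> rep x = target (exist S y hy).
Proof. intro g. exact (comp_iso_rep X s s_pp _ _ _ _ g (target_rep _)). Qed.

Lemma base_iso_copy y hy y' hy' x x' u u' :
  comp_iso X s s_pp r0 (target (exist S y hy)) u x ->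
  comp_iso X s s_pp r0 (target (exist S y' hy')) u' x' -> rep x = rep x' -> y = y'.
Proof.
intros g g' e. rewrite (base_iso_rep _ _ _ _ g), (base_iso_rep _ _ _ _ g') in e.
apply proj1_sig_inj, iota_inj in e. exact (f_equal (@proj1_sig _ _) e).
Qed.

Lemma base_iso_bij : rel_bij
  (fun z : copies X s Y Rare r0 => match z with inl _ => True | inr p => S (fst p) end) base base_iso.
Proof.
split; [|split; [|split; [|split]]].
- intros [a|[y cc]] x h; simpl in h.
  + subst. split; [exact I | left; exact (proj2_sig a)].
  + destruct h as [hy g]. split; [exact hy|]. right. exists (exist _ y hy).
    symmetry. exact (base_iso_rep _ _ _ _ g).
- intros [a|[y cc]] hz; [exists (proj1_sig a); reflexivity|]. simpl in hz.
  destruct (proj1 (proj2 (comp_iso_bij X s s_pp r0 _ (code_target (exist _ y hz))))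
    (proj1_sig cc) (proj2_sig cc)) as [v hv].
  exists v, hz. exact hv.
- intros x [hx|[[y hy] e]]; [exists (inl (exist _ x hx)); reflexivity|].
  assert (hm : reach s (target (exist _ y hy)) x) by (rewrite e; apply rep_reach).
  destruct (proj1 (proj2 (proj2 (comp_iso_bij X s s_pp r0 _ (code_target (exist _ y hy))))) x hm)
    as [u g].
  exists (inr (y, exist _ u (comp_iso_dom X s s_pp _ _ _ _ g))). exists hy. exact g.
- intros [a|[y cc]] x x' h h'; simpl in *; [congruence|].
  destruct h as [hy g], h' as [hy' g']. rewrite (proof_irrelevance _ hy hy') in g.
  exact (proj1 (proj2 (proj2 (proj2 (comp_iso_bij X s s_pp r0 _ (code_target (exist _ y hy'))))))
    (proj1_sig cc) _ _ g g').
- intros [a|[y cc]] [a'|[y' cc']] x h h'; simpl in *.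
  + f_equal. apply proj1_sig_inj. congruence.
  + exfalso. destruct h' as [hy' g']. subst x.
    apply (rare_not_rho _ (proj2_sig a)). rewrite (base_iso_rep _ _ _ _ g'). exact (proj2_sig (iota _)).
  + exfalso. destruct h as [hy g]. subst x.
    apply (rare_not_rho _ (proj2_sig a')). rewrite (base_iso_rep _ _ _ _ g). exact (proj2_sig (iota _)).
  + destruct h as [hy g], h' as [hy' g'].
    assert (ey := base_iso_copy _ _ _ _ _ _ _ _ g g' eq_refl). subst y'.
    rewrite (proof_irrelevance _ hy' hy) in g'.
    assert (E := proj2 (proj2 (proj2 (proj2 (comp_iso_bij X s s_pp r0 _ (code_target (exist _ y hy)))))) _ _ _ g g').
    rewrite (proj1_sig_inj cc cc' E). reflexivity.
Qed.

Lemma base_iso_hom n z1 z2 x1 x2 : base_iso z1 x1 -> base_iso z2 x2 ->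
  (s_copies X s Y Rare s_rare r0 n z1 z2 <-> s n x1 x2).
Proof.
intros h1 h2.
destruct z1 as [a|[y cc]]; destruct z2 as [b|[y' cc']]; simpl in *.
- unfold s_rare. subst. reflexivity.
- split; [contradiction|]. intro hs. destruct h2 as [hy g]. subst x1.
  apply (rare_not_rho _ (proj2_sig a)). rewrite (rep_adjacent X s n _ _ hs), (base_iso_rep _ _ _ _ g).
  exact (proj2_sig (iota _)).
- split; [contradiction|]. intro hs. destruct h1 as [hy g]. subst x2.
  apply (rare_not_rho _ (proj2_sig b)). rewrite <- (rep_adjacent X s n _ _ hs), (base_iso_rep _ _ _ _ g).
  exact (proj2_sig (iota _)).
- destruct h1 as [hy g1], h2 as [hy' g2]. split.
  + intros [<- hs]. rewrite (proof_irrelevance _ hy' hy) in g2.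
    exact (proj1 (comp_iso_hom X s s_pp r0 _ n _ _ _ _ (code_target (exist _ y hy)) g1 g2) hs).
  + intro hs. assert (ey := base_iso_copy _ _ _ _ _ _ _ _ g1 g2 (rep_adjacent X s n _ _ hs)). subst y'.
    rewrite (proof_irrelevance _ hy' hy) in g2. split; [reflexivity|].
    exact (proj2 (comp_iso_hom X s s_pp r0 _ n _ _ _ _ (code_target (exist _ y hy)) g1 g2) hs).
Qed.

Lemma base_realizable : realizable A w s base.
Proof. exact (realizable_transport A w _ base base_iso _ s base_iso_bij base_iso_hom S_real). Qed.


Definition leftover m := rep m = m /\ ~ rare (code m) /\ ~ exists j, target j = m.
Definition leftover_of (t : Code) m := leftover m /\ code m = t.

(* [iota] used at most continuum many of the components of code [rho]. *)
Lemma leftover_rho_infinite : card_le nat {m | leftover_of rho m}.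
Proof.
destruct (card_le_total nat {m | leftover_of rho m}) as [h|h]; [exact h | exfalso].
apply rho_abundant, (card_le_trans _ ({y | S y} + {m | leftover_of rho m})).
- apply (card_le_rel (fun (m : {m | of_code rho m}) t => match t with
    | inl j => iota j = m | inr q => proj1_sig q = proj1_sig m end)).
  + intros [m hm]. destruct (classic (exists j, target j = m)) as [[j e]|ne].
    * exists (inl j). apply proj1_sig_inj. exact e.
    * assert (hq : leftover_of rho m).
      { destruct hm as [h1 h2]. repeat split; auto. rewrite h2. apply rho_not_rare. }
      exists (inr (exist _ m hq)). reflexivity.
  + intros a b [j|q] e e'; [congruence | apply proj1_sig_inj; congruence].
- apply (card_le_trans _ (continuum + continuum)); [|apply card_le_continuum_sum].
  apply card_le_sum; [apply S_continuum | apply (card_le_trans _ nat _ h), card_le_nat_continuum].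
Qed.

Lemma leftover_infinite t m0 : leftover_of t m0 -> card_le nat {m | leftover_of t m}.
Proof.
intro hm0. destruct (classic (t = rho)) as [->|ne]; [apply leftover_rho_infinite|].
assert (nf : card_le nat {m | of_code t m}).
{ destruct hm0 as [[_ [h _]] <-]. apply NNPP, h. }
apply (card_le_trans _ _ _ nf), card_le_sig_sub. intros m [h1 h2]. repeat split; auto.
- rewrite h2. intro f. exact (f nf).
- intros [j ej]. apply ne. rewrite <- h2, <- ej. exact (proj2 (proj2_sig (iota j))).
Qed.

Lemma card_le_empty T : card_le Empty_set T.
Proof. exists (fun e : Empty_set => match e with end). intros []. Qed.

Definition s_empty (n : nat) : rel Empty_set := fun _ _ => False.

Lemma s_empty_pp n : partial_perm (s_empty n).
Proof. split; intros []. Qed.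

(* For a code [t]: a component [r] of code [t], a countable [St] carrying copies of it, and a
   bijection [Bt] from [leftover_of t * St] onto [leftover_of t]. *)
Definition block_data t (r : X) (St : Y -> Prop) (Bt : X -> Y -> X -> Prop) :=
  rep r = r /\ code r = t /\
  realizable A w (s_copies X s Y Empty_set s_empty r)
    (fun z => match z with inl _ => True | inr p => St (fst p) end) /\
  rel_bij (fun p : X * Y => leftover_of t (fst p) /\ St (snd p)) (leftover_of t)
    (fun p m => Bt (fst p) (snd p) m).

Lemma block_data_exists t : (exists m, leftover_of t m) -> exists r St Bt, block_data t r St Bt.
Proof.
intros [m0 hm0]. pose proof Y_inf as [ey _].
destruct (small_copies_realizable A w c c_inj X s s_pp Y U Y_inf Empty_set s_empty s_empty_pp
  (card_le_empty Y) m0 (ey 0))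
  as [St [St_y0 [St_count St_real]]].
assert (St_nat : card_le {y | St y} nat).
{ apply (card_le_trans _ _ _ St_count), (card_le_trans _ (nat * nat)); [|apply card_le_nat_pair].
  apply card_le_prod; [|apply card_le_refl]. exists (fun _ => 0). intros [[]|[]] [[]|[]] _. reflexivity. }
destruct (schroeder_bernstein ({m | leftover_of t m} * {y | St y}) {m | leftover_of t m}) as [h [hi hs]].
- apply (card_le_trans _ _ _ (card_le_prod _ _ _ _ (card_le_refl _) St_nat)).
  exact (card_mul_nat _ (leftover_infinite t m0 hm0)).
- exists (fun q => (q, exist St (ey 0) St_y0)). intros a b e. injection e; auto.
- exists m0, St, (fun q y m => exists hq hy, proj1_sig (h (exist _ q hq, exist _ y hy)) = m).
  split; [exact (proj1 (proj1 hm0)) | split; [exact (proj2 hm0) | split; [exact St_real|]]].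
  split; [|split; [|split; [|split]]].
  + intros [q y] m [hq [hy <-]]. split; [split; assumption | exact (proj2_sig _)].
  + intros [q y] [hq hy]. simpl in *. exists (proj1_sig (h (exist _ q hq, exist _ y hy))), hq, hy. reflexivity.
  + intros m hm. destruct (hs (exist _ m hm)) as [[[q hq] [y hy]] e].
    exists (q, y), hq, hy. simpl. rewrite e. reflexivity.
  + intros [q y] m m' [hq [hy <-]] [hq' [hy' <-]]. simpl in *.
    rewrite (proof_irrelevance _ hq hq'), (proof_irrelevance _ hy hy'). reflexivity.
  + intros [q y] [q' y'] m [hq [hy e]] [hq' [hy' e']]. simpl in *.
    assert (E : h (exist _ q hq, exist _ y hy) = h (exist _ q' hq', exist _ y' hy'))
      by (apply proj1_sig_inj; transitivity m; [exact e | symmetry; exact e']).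
    apply hi in E. injection E. intros. subst. reflexivity.
Qed.


Section Blocks.
Variables (dr : Code -> X) (dS : Code -> Y -> Prop) (dB : Code -> X -> Y -> X -> Prop).
Hypothesis dat : forall t, (exists m, leftover_of t m) -> block_data t (dr t) (dS t) (dB t).

(* The components of code [t] are grouped into blocks indexed by [leftover_of t]: the block of
   [q] consists of the components [dB t q y _] with [dS t y], one copy per [y]. *)
Definition block q x := exists y m, dB (code q) q y m /\ rep x = m.

Section OneBlock.
Variable q : X.
Hypothesis q_left : leftover q.

Lemma block_data_of : block_data (code q) (dr (code q)) (dS (code q)) (dB (code q)).
Proof. exact (dat (code q) (ex_intro _ q (conj q_left eq_refl))). Qed.

Lemma block_member y m : dB (code q) q y m -> dS (code q) y /\ leftover_of (code q) m.
Proof.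
intro h. destruct block_data_of as [_ [_ [_ [B1 _]]]].
destruct (B1 (q, y) m h) as [[_ hy] hm]. auto.
Qed.

Lemma block_code y m : dB (code q) q y m -> code (dr (code q)) = code m.
Proof.
intro h. destruct block_data_of as [_ [hc _]]. rewrite hc.
symmetry. exact (proj2 (proj2 (block_member y m h))).
Qed.

Lemma block_rep y m : dB (code q) q y m -> rep m = m.
Proof. intro h. exact (proj1 (proj1 (proj2 (block_member y m h)))). Qed.

Lemma block_fun y m m' : dB (code q) q y m -> dB (code q) q y m' -> m = m'.
Proof. destruct block_data_of as [_ [_ [_ [_ [_ [_ [B4 _]]]]]]]. exact (B4 (q, y) m m'). Qed.

Lemma block_inj y y' m : dB (code q) q y m -> dB (code q) q y' m -> y = y'.
Proof.
destruct block_data_of as [_ [_ [_ [_ [_ [_ [_ B5]]]]]]]. intros h h'.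
assert (E : (q, y) = (q, y')) by exact (B5 (q, y) (q, y') m h h'). injection E. auto.
Qed.

Definition block_iso (z : copies X s Y Empty_set (dr (code q))) (x : X) : Prop :=
  match z with
  | inl _ => False
  | inr p => dS (code q) (fst p) /\
      exists m, dB (code q) q (fst p) m /\ comp_iso X s s_pp (dr (code q)) m (proj1_sig (snd p)) x
  end.

Lemma block_iso_bij : rel_bij
  (fun z : copies X s Y Empty_set (dr (code q)) => match z with inl _ => True | inr p => dS (code q) (fst p) end)
  (block q) block_iso.
Proof.
destruct block_data_of as [_ [_ [_ [_ [B2 _]]]]].
split; [|split; [|split; [|split]]].
- intros [[]|[y cc]] x [hy [m [hb g]]]. split; [exact hy|].
  exists y, m. split; [exact hb | exact (comp_iso_rep X s s_pp _ _ _ _ g (block_rep _ _ hb))].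
- intros [[]|[y cc]] hz. destruct (B2 (q, y) (conj (conj q_left eq_refl) hz)) as [m hm].
  destruct (proj1 (proj2 (comp_iso_bij X s s_pp _ m (block_code _ _ hm))) (proj1_sig cc) (proj2_sig cc))
    as [v hv].
  exists v. split; [exact hz|]. exists m. auto.
- intros x [y [m [hb e]]].
  assert (hm : reach s m x) by (rewrite <- e; apply rep_reach).
  destruct (proj1 (proj2 (proj2 (comp_iso_bij X s s_pp _ m (block_code _ _ hb)))) x hm) as [u g].
  exists (inr (y, exist _ u (comp_iso_dom X s s_pp _ _ _ _ g))). split; [exact (proj1 (block_member _ _ hb))|].
  exists m. auto.
- intros [[]|[y cc]] x x' [_ [m [hb g]]] [_ [m' [hb' g']]]. simpl in *.
  rewrite <- (block_fun _ _ _ hb hb') in g'.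
  exact (proj1 (proj2 (proj2 (proj2 (comp_iso_bij X s s_pp _ m (block_code _ _ hb))))) _ _ _ g g').
- intros [[]|[y cc]] [[]|[y' cc']] x [_ [m [hb g]]] [_ [m' [hb' g']]]. simpl in *.
  assert (em : m = m').
  { rewrite <- (comp_iso_rep X s s_pp _ _ _ _ g (block_rep _ _ hb)).
    exact (comp_iso_rep X s s_pp _ _ _ _ g' (block_rep _ _ hb')). }
  subst m'. assert (ey := block_inj _ _ _ hb hb'). subst y'.
  assert (E := proj2 (proj2 (proj2 (proj2 (comp_iso_bij X s s_pp _ m (block_code _ _ hb))))) _ _ _ g g').
  rewrite (proj1_sig_inj cc cc' E). reflexivity.
Qed.

Lemma block_iso_hom n z1 z2 x1 x2 : block_iso z1 x1 -> block_iso z2 x2 ->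
  (s_copies X s Y Empty_set s_empty (dr (code q)) n z1 z2 <-> s n x1 x2).
Proof.
destruct z1 as [[]|[y cc]], z2 as [[]|[y' cc']]. simpl.
intros [_ [m [hb g1]]] [_ [m' [hb' g2]]]. split.
- intros [<- hs]. rewrite <- (block_fun _ _ _ hb hb') in g2.
  exact (proj1 (comp_iso_hom X s s_pp _ m n _ _ _ _ (block_code _ _ hb) g1 g2) hs).
- intro hs.
  assert (em : m = m').
  { rewrite <- (comp_iso_rep X s s_pp _ _ _ _ g1 (block_rep _ _ hb)),
            <- (comp_iso_rep X s s_pp _ _ _ _ g2 (block_rep _ _ hb')).
    exact (rep_adjacent X s n _ _ hs). }
  subst m'. assert (ey := block_inj _ _ _ hb hb'). subst y'. split; [reflexivity|].
  exact (proj2 (comp_iso_hom X s s_pp _ m n _ _ _ _ (block_code _ _ hb) g1 g2) hs).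
Qed.

Lemma block_realizable : realizable A w s (block q).
Proof.
destruct block_data_of as [_ [_ [R _]]].
exact (realizable_transport A w _ (block q) block_iso _ s block_iso_bij block_iso_hom R).
Qed.

End OneBlock.

Definition piece (i : option X) (x : X) : Prop :=
  match i with None => base x | Some q => leftover q /\ block q x end.

Lemma piece_rep i x x' : piece i x -> rep x = rep x' -> piece i x'.
Proof.
intros h e. destruct i as [q|]; simpl in *.
- destruct h as [hq [y [m [hb e']]]]. split; [exact hq|]. exists y, m. split; congruence.
- unfold base, in_rare in *. rewrite <- e. exact h.
Qed.

Lemma block_not_base q x : leftover q -> block q x -> ~ base x.
Proof.
intros hq [y [m [hb e]]] hx. destruct (proj2 (block_member q hq y m hb)) as [[_ [nf ni]] _].
destruct hx as [h|[j ej]].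
- apply nf. unfold in_rare in h. rewrite e in h. exact h.
- apply ni. exists j. congruence.
Qed.

Lemma piece_disj i j x : piece i x -> piece j x -> i = j.
Proof.
destruct i as [q|], j as [q'|]; simpl; intros h h'; auto.
- destruct h as [hq [y [m [hb e]]]], h' as [hq' [y' [m' [hb' e']]]].
  rewrite e in e'. subst m'.
  assert (ct : code q' = code q).
  { rewrite <- (proj2 (proj2 (block_member q hq y m hb))). symmetry. exact (proj2 (proj2 (block_member q' hq' y' m hb'))). }
  rewrite ct in hb'.
  destruct (block_data_of q hq) as [_ [_ [_ [_ [_ [_ [_ B5]]]]]]].
  assert (E : (q, y) = (q', y')) by exact (B5 (q, y) (q', y') m hb hb'). injection E. intros _ ->. reflexivity.
- exfalso. destruct h as [hq hb]. exact (block_not_base q x hq hb h').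
- exfalso. destruct h' as [hq hb]. exact (block_not_base q' x hq hb h).
Qed.

Lemma realizable_everywhere_of_blocks : realizable A w s (fun _ => True).
Proof.
apply (realizable_ext A w s (fun z => exists i, piece i z)).
{ intro x. split; [auto|]. intros _.
  destruct (classic (base x)) as [hx|hx]; [exists None; exact hx|].
  assert (hq : leftover (rep x)).
  { split; [apply rep_idem | split; intro h; apply hx; [left; exact h | right; destruct h as [j e]; exists j; exact e]]. }
  destruct (block_data_of (rep x) hq) as [_ [_ [_ [B1 [_ [B3 _]]]]]].
  destruct (B3 (rep x) (conj hq eq_refl)) as [[q y] hb].
  destruct (B1 (q, y) (rep x) hb) as [[[hq' ct] _] _]. simpl in hq', ct.
  exists (Some q). split; [exact hq'|]. exists y, (rep x). split; [rewrite ct; exact hb | reflexivity]. }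
apply realizable_union; [exact piece_disj | |].
- intros [q|]; simpl; [|exact base_realizable].
  destruct (classic (leftover q)) as [hq|hq].
  + apply (realizable_ext A w s (block q)); [intro z; split; [intro; split; auto | intros [_ h]; exact h]|].
    exact (block_realizable q hq).
  + apply (realizable_ext A w s (fun _ => False)); [|apply realizable_empty].
    intro z. split; [contradiction | intros [h _]; contradiction].
- intros n i j x y hi hj hs. apply (piece_disj i j y); [|exact hj].
  apply (piece_rep i x); [exact hi | exact (rep_adjacent X s n _ _ hs)].
Qed.

End Blocks.

End UniversalDown.

Lemma universal_downward (A : Type) (w : nat -> word A) X Y :
  countable A -> card_lt continuum X -> card_le X Y -> universal Y A w -> universal X A w.
Proof.
intros [c c_inj] continuum_X XY U. apply universal_of_realizable_everywhere. intros s s_pp.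
destruct (abundant_code_exists X s s_pp continuum_X) as [rho rho_abundant].
destruct (continuum_le_rho X s s_pp rho rho_abundant) as [k _].
set (r0 := proj1_sig (k (fun _ => true))).
assert (r0_rho : of_code X s s_pp rho r0) by exact (proj2_sig (k (fun _ => true))).
pose proof (Y_inf X Y continuum_X XY) as [ey _].
destruct (small_copies_realizable A w c c_inj X s s_pp Y U (Y_inf X Y continuum_X XY)
  (Rare X s s_pp) (s_rare X s s_pp) (s_rare_pp X s s_pp)
  (card_le_trans _ _ _ (card_le_sig _) XY) r0 (ey 0)) as [S [_ [S_small S_real]]].
destruct (card_le_trans _ _ _ (S_continuum X s s_pp Y S S_small)
  (continuum_le_rho X s s_pp rho rho_abundant)) as [iota iota_inj].
destruct (choice (fun t (d : X * (Y -> Prop) * (X -> Y -> X -> Prop)) =>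
   (exists m, leftover_of X s s_pp Y rho S iota t m) ->
   block_data A w X s s_pp Y rho S iota t (fst (fst d)) (snd (fst d)) (snd d))) as [D HD].
{ intro t. destruct (classic (exists m, leftover_of X s s_pp Y rho S iota t m)) as [h|h].
  - destruct (block_data_exists A w c c_inj X s s_pp Y U continuum_X XY rho rho_abundant
      S S_small iota t h) as [r [St [Bt HB]]].
    exists (r, St, Bt). intros _. exact HB.
  - exists (r0, fun _ => True, fun _ _ _ => True). intro; contradiction. }
exact (realizable_everywhere_of_blocks A w X s s_pp Y rho rho_abundant r0 r0_rho S S_real
  iota iota_inj (fun t => fst (fst (D t))) (fun t => snd (fst (D t))) (fun t => snd (D t)) HD).
Qed.

Theorem corollary2p3 :
  (forall X Y : Type, infinite X -> infinite Y -> card_lt X Y ->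
     (forall (A : Type) (w : nat -> word A), countable A ->
        universal X A w -> universal Y A w) /\
     (card_lt (nat -> bool) X ->
        forall (A : Type) (w : nat -> word A), countable A ->
          universal Y A w -> universal X A w)) /\
  (forall X Y : Type, card_lt (nat -> bool) X -> card_le X Y ->
     forall (A : Type) (w : nat -> word A), countable A ->
       (universal X A w <-> universal Y A w)).
Proof.
split.
- intros X Y X_inf _ [XY _]. split.
  + intros A w _. exact (universal_upward A w X Y X_inf XY).
  + intros continuum_X A w A_count. exact (universal_downward A w X Y A_count continuum_X XY).
- intros X Y continuum_X XY A w A_count. split.
  + apply (universal_upward A w X Y); [|exact XY].
    exact (card_le_trans _ _ _ card_le_nat_continuum (proj1 continuum_X)).
  + exact (universal_downward A w X Y A_count continuum_X XY).
Qed.
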